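(* Let $\mathcal{A}$ be an $l$-visibly simple $*$-algebra of operators on a tensor product of finite-dimensional Hilbert spaces indexed by the sites of a metric space. Let $O$ be any operator (not necessarily in $\mathcal{A}$). If there exists $X\in\mathcal{A}$ supported on a set $S$ such that $\mathrm{tr}(XO)\,\mathrm{tr}(I)\ne\mathrm{tr}(X)\,\mathrm{tr}(O)$, then there is an operator $P\in\mathcal{A}$ supported on the set of sites within distance $l$ of $S$ such that $[O,P]\ne0$.
   Context: An operator is supported on a set $S$ if it equals an operator on $\bigotimes_{x\in S}\mathcal{H}_x$ tensored with the identity; the support is the minimal such set (scalars have empty support). $\mathcal{A}$ is $l$-visibly simple if for every $O\in\mathcal{A}$ and every site $x$ in the support of $O$ there is $P\in\mathcal{A}$ supported within distance $l$ of $x$ with $[O,P]\ne0$. *)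

From HB Require Import structures.
From mathcomp Require Import all_boot all_order all_algebra.
From mathcomp Require Import reals complex.
Set Implicit Arguments. Unset Strict Implicit. Unset Printing Implicit Defensive.
Import Order.TTheory GRing.Theory Num.Theory.
Local Open Scope ring_scope.

(* Basis configurations of (x) H_x, where dim H_x = n x. *)
Definition config (V : finType) (n : V -> nat) := {dffun forall x : V, 'I_(n x)}.

Definition hdim (V : finType) (n : V -> nat) : nat := #|{: config n}|.

(* Operators on (x) H_x, entries in C = R[i]. *)
Definition op (R : realType) (V : finType) (n : V -> nat) :=
  'M[R[i]]_(hdim n).

Definition cfg (V : finType) (n : V -> nat) (i : 'I_(hdim n)) : config n :=
  enum_val i.

(* O is supported on S : O = A (x) I_{V \ S} for some operator A on (x)_{x in S} H_x.
   A is represented by a kernel on full configurations depending only on the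
   S-coordinates of its arguments. *)
Definition supported_on (R : realType) (V : finType) (n : V -> nat)
    (S : {set V}) (O : op R n) : Prop :=
  exists A : config n -> config n -> R[i],
    (forall c1 c2 d1 d2 : config n,
        (forall x, x \in S -> c1 x = c2 x /\ d1 x = d2 x) ->
        A c1 d1 = A c2 d2) /\
    (forall i j : 'I_(hdim n),
        O i j = if [forall x, (x \notin S) ==> (cfg i x == cfg j x)]
                then A (cfg i) (cfg j) else 0).

Definition in_support (R : realType) (V : finType) (n : V -> nat) (O : op R n)
    (x : V) : Prop :=
  forall S : {set V}, supported_on S O -> x \in S.

Definition adj (R : realType) (V : finType) (n : V -> nat) (O : op R n) : op R n :=
  (map_mx (fun z : R[i] => z^*) O)^T.

Definition commutator (R : realType) (V : finType) (n : V -> nat) (O P : op R n)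
    : op R n := O *m P - P *m O.

Definition star_algebra (R : realType) (V : finType) (n : V -> nat)
    (A : op R n -> Prop) : Prop :=
  [/\ A 1%:M,
      (forall O P, A O -> A P -> A (O + P)),
      (forall (c : R[i]) O, A O -> A (c *: O)),
      (forall O P, A O -> A P -> A (O *m P)) &
      (forall O, A O -> A (adj O))].

Definition is_metric (R : realType) (V : finType) (d : V -> V -> R) : Prop :=
  [/\ forall x y, 0 <= d x y,
      forall x y, (d x y == 0) = (x == y),
      forall x y, d x y = d y x &
      forall x y z, d x z <= d x y + d y z].

Definition nbhd (R : realType) (V : finType) (d : V -> V -> R) (l : R)
    (S : {set V}) : {set V} :=
  [set y | [exists x in S, d x y <= l]].

Definition visibly_simple (R : realType) (V : finType) (n : V -> nat)
    (d : V -> V -> R) (l : R) (A : op R n -> Prop) : Prop :=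
  forall O, A O -> forall x, in_support O x ->
    exists P, [/\ A P, supported_on (nbhd d l [set x]) P &
                  commutator O P != 0].

From HB Require Import structures.
From mathcomp Require Import all_boot all_order all_algebra.
From mathcomp Require Import reals complex.
From mathcomp Require Import zify.
From Stdlib Require Import Classical.
Set Implicit Arguments. Unset Strict Implicit. Unset Printing Implicit Defensive.
Import Order.TTheory GRing.Theory Num.Theory.
Local Open Scope ring_scope.

(* If O commuted with every P in A supported near S, so would the projection Q
   of O onto A for the trace pairing: [Q, P] lies in A and is orthogonal to A,
   because tr (W [Q, P]) = tr ([P, W] Q) = tr ([P, W] O) = tr (W [O, P]) = 0.
   Visible simplicity then keeps every site of S out of the support of Q, so Q
   is supported on the complement of S, and operators supported on
   complementary sets factorize the normalized trace:
   tr (X Q) tr I = tr X tr Q.  Since X and I lie in A, tr (X O) = tr (X Q) and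
   tr O = tr Q, contradicting the hypothesis. *)

Section SubspaceOfPredicate.
Variables (K : fieldType) (vT : vectType K) (P : vT -> Prop).
Hypotheses (PD : forall u v, P u -> P v -> P (u + v))
           (PZ : forall a v, P v -> P (a *: v)).

Lemma vspace_grow (U : {vspace vT}) : (forall v, v \in U -> P v) ->
  (forall v, P v <-> v \in U) \/
  exists2 U' : {vspace vT}, (forall v, v \in U' -> P v) & (\dim U < \dim U')%N.
Proof.
move=> UP; case: (classic (forall v, P v -> v \in U)) => [PU|].
  by left=> v; split; [apply: PU | apply: UP].
move=> /not_all_ex_not [v /(@imply_to_and (P v)) [Pv vNU]]; right.
exists (<[v]> + U)%VS.
  by move=> _ /memv_addP [_ /vlineP [a ->] [u /UP Pu ->]]; apply/PD/Pu/PZ.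
rewrite (ltn_leqif (dimv_leqif_eq (addvSr _ _))); apply: contra_notN vNU => /eqP ->.
exact: subvP (addvSl _ _) _ (memv_line v).
Qed.

Hypothesis P0 : P 0.

Lemma exists_vspace_of_pred : exists U : {vspace vT}, forall v, P v <-> v \in U.
Proof.
have grow: forall j (U : {vspace vT}), (\dim {:vT} - \dim U <= j)%N ->
    (forall v, v \in U -> P v) ->
    exists U : {vspace vT}, forall v, P v <-> v \in U.
  elim=> [|j IH] U dimU UP; have [PU | [U' U'P ltUU']] := vspace_grow UP.
  - by exists U.
  - by have := dimvS (subvf U'); lia.
  - by exists U.
  - by apply: (IH U') => //; lia.
apply: (grow _ 0%VS (leq_subr _ _)) => v.
by rewrite memv0 => /eqP ->.
Qed.
End SubspaceOfPredicate.

Section TraceForm.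
Variables (R : realType) (m : nat).
Local Notation M := 'M[R[i]]_m.

Definition adjmx (Z : M) : M := (map_mx (fun z : R[i] => z^*) Z)^T.

Lemma mxtrace_mul_adjmx_eq0 (Z : M) : \tr (Z *m adjmx Z) = 0 -> Z = 0.
Proof.
have trE : \tr (Z *m adjmx Z) = \sum_i \sum_j Z i j * (Z i j)^*.
  by apply: eq_bigr => i _; rewrite !mxE; apply: eq_bigr => j _; rewrite !mxE.
have rowZ_ge0 i : 0 <= \sum_j Z i j * (Z i j)^*.
  by apply: sumr_ge0 => j _; apply: mul_conjC_ge0.
rewrite trE => /(psumr_eq0P (fun i _ => rowZ_ge0 i)) rowZ0.
apply/matrixP => i j; rewrite mxE; apply/eqP; rewrite -mul_conjC_eq0; apply/eqP.
exact: psumr_eq0P (fun j _ => mul_conjC_ge0 (Z i j)) (rowZ0 i isT) j isT.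
Qed.

Lemma mxtrace_mulmx_suml I (r : seq I) (a : I -> R[i]) (E : I -> M) (N : M) :
  \tr ((\sum_(i <- r) a i *: E i) *m N) = \sum_(i <- r) a i * \tr (E i *m N).
Proof.
rewrite mulmx_suml linear_sum; apply: eq_bigr => i _.
by rewrite -scalemxAl linearZ.
Qed.

Lemma mxtrace_mul_commutator (W N P : M) :
  \tr (W *m (N *m P - P *m N)) = \tr ((P *m W - W *m P) *m N).
Proof.
rewrite mulmxBl mulmxBr !raddfB /= !mulmxA; congr (_ - _).
by rewrite mxtrace_mulC mulmxA.
Qed.

Lemma eq_mxtrace_span k (e : k.-tuple M) (Y Z : M) :
  (forall i : 'I_k, \tr (e`_i *m Y) = \tr (e`_i *m Z)) ->
  {in <<e>>%VS, forall W, \tr (W *m Y) = \tr (W *m Z)}.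
Proof.
move=> eYZ W /coord_span ->; rewrite !mxtrace_mulmx_suml.
by apply: eq_bigr => i _; rewrite eYZ.
Qed.

Variable U : {vspace M}.
Hypothesis adjU : {in U, forall Z, adjmx Z \in U}.

Lemma trace_form_nondegenerate (Y : M) :
  Y \in U -> {in U, forall W, \tr (W *m Y) = 0} -> Y = 0.
Proof.
move=> YU Y_orth; apply: mxtrace_mul_adjmx_eq0.
by rewrite mxtrace_mulC Y_orth ?adjU.
Qed.

(* For U closed under adjoints this is the Hilbert-Schmidt projection of O
   onto U, written with the bilinear pairing (W, Q) |-> tr (W Q). *)
Definition trace_proj (O Q : M) :=
  Q \in U /\ {in U, forall W, \tr (W *m Q) = \tr (W *m O)}.

Lemma trace_proj_exists (O : M) : exists Q, trace_proj O Q.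
Proof.
have eB := vbasisP U; set e := vbasis U.
have spanU W : W \in U -> W \in <<e>>%VS by rewrite (span_basis eB).
have eU (i : 'I_(\dim U)) : e`_i \in U by rewrite vbasis_mem ?mem_nth ?size_tuple.
pose G : 'M_(\dim U) := \matrix_(i, j) \tr (e`_i *m e`_j).
have mulG (c : 'rV_(\dim U)) j : (c *m G) 0 j = \tr ((\sum_i c 0 i *: e`_i) *m e`_j).
  by rewrite mxE mxtrace_mulmx_suml; apply: eq_bigr => i _; rewrite mxE.
have Gunit : G \in unitmx.
  rewrite unitmxE unitfE; apply/negP => /det0P [c c_neq0 cG0].
  move/negP: c_neq0; apply; apply/eqP/rowP => i; rewrite mxE.
  move/freeP: (basis_free eB); apply; apply: trace_form_nondegenerate.
    by apply: memv_suml => j _; rewrite memvZ.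
  move=> W /spanU We; transitivity (\tr (W *m 0)); last by rewrite mulmx0 mxtrace0.
  apply: eq_mxtrace_span We => j.
  by rewrite mulmx0 mxtrace0 mxtrace_mulC -mulG cG0 mxE.
pose c := \row_j \tr (e`_j *m O) *m invmx G.
exists (\sum_i c 0 i *: e`_i); split; first by apply: memv_suml => i _; rewrite memvZ.
move=> W /spanU We; apply: eq_mxtrace_span We.
by move=> j; rewrite mxtrace_mulC -mulG mulmxKV // mxE.
Qed.

Hypothesis mulU : {in U &, forall P Q, P *m Q \in U}.

Lemma trace_proj_commute (O Q P : M) : trace_proj O Q -> P \in U ->
  O *m P = P *m O -> Q *m P = P *m Q.
Proof.
move=> [QU QO] PU OP; apply/eqP; rewrite -subr_eq0; apply/eqP.
apply: trace_form_nondegenerate => [|W WU]; first by rewrite memvB ?mulU.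
rewrite mxtrace_mul_commutator QO ?memvB ?mulU //.
by rewrite -mxtrace_mul_commutator OP subrr mulmx0 mxtrace0.
Qed.

End TraceForm.

Section Support.
Variables (R : realType) (V : finType) (n : V -> nat).
Local Notation cf := (config n).
Local Notation op := (op R n).
Implicit Types (S T : {set V}) (O X Q : op) (c d e : cf).

Definition entry O c d : R[i] := O (enum_rank c) (enum_rank d).

Definition eq_off S c d := [forall x, (x \notin S) ==> (c x == d x)].

Definition patch S c d : cf := [ffun x => if x \in S then d x else c x].

Definition local_entries S O :=
  (forall c d, ~~ eq_off S c d -> entry O c d = 0) /\
  (forall c d c', eq_off S c d -> entry O c d = entry O (patch S c' c) (patch S c' d)).

Lemma eq_offP S c d : reflect (forall x, x \notin S -> c x = d x) (eq_off S c d).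
Proof.
apply: (iffP forallP) => [cd x xS | cd x]; first exact/eqP/(implyP (cd x)).
by apply/implyP => /cd ->.
Qed.

Lemma eq_off_refl S c : eq_off S c c.
Proof. exact/eq_offP. Qed.

Lemma eq_off_sym S c d : eq_off S c d = eq_off S d c.
Proof. by apply/eq_offP/eq_offP => cd x /cd. Qed.

Lemma eq_offS S T c d : S \subset T -> eq_off S c d -> eq_off T c d.
Proof.
move=> /subsetP ST /eq_offP cd; apply/eq_offP => x xT; apply: cd.
by apply: contra xT; apply: ST.
Qed.

Lemma eq_offI S T c d : eq_off S c d -> eq_off T c d -> eq_off (S :&: T) c d.
Proof.
move=> /eq_offP cdS /eq_offP cdT; apply/eq_offP => x.
by rewrite in_setI negb_and => /orP [/cdS | /cdT].
Qed.

Lemma eq_off_setC S c d : eq_off S c d -> eq_off (~: S) c d -> c = d.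
Proof.
move=> /eq_offP cdS /eq_offP cdC; apply/ffunP => x.
by case: (boolP (x \in S)) => [xS | /cdS //]; apply: cdC; rewrite in_setC xS.
Qed.

Lemma patchE S c d x : patch S c d x = if x \in S then d x else c x.
Proof. by rewrite ffunE. Qed.

Lemma eq_off_patch S c c' d : eq_off S (patch S c' c) (patch S c' d).
Proof. by apply/eq_offP => x xS; rewrite !patchE (negbTE xS). Qed.

Lemma eq_off_patchr S c d : eq_off S c (patch S c d).
Proof. by apply/eq_offP => x xS; rewrite patchE (negbTE xS). Qed.

Lemma patchI S T c c' : patch S c' (patch T c' c) = patch (S :&: T) c' c.
Proof. by apply/ffunP => x; rewrite !patchE in_setI; case: (x \in S). Qed.

Lemma patch_setC S c d : patch (~: S) c d = patch S d c.
Proof. by apply/ffunP => x; rewrite !patchE in_setC; case: (x \in S). Qed.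

Lemma supported_onE S O : supported_on S O <-> local_entries S O.
Proof.
have entryE i j : O i j = entry O (cfg i) (cfg j) by rewrite /entry /cfg !enum_valK.
split=> [[K [K_local OK]] | [O_off O_inv]].
  split=> [c d | c d c' cd]; rewrite /entry !OK /cfg !enum_rankK -!/(eq_off _ _ _).
    by move/negbTE ->.
  by rewrite cd eq_off_patch; apply: K_local => x xS; rewrite !patchE xS.
exists (fun c d => entry O c (patch S c d)); split.
  move=> c1 c2 d1 d2 cd; rewrite (O_inv _ _ c2) ?eq_off_patchr //; congr (entry O _ _).
    by apply/ffunP => x; rewrite !patchE; case: (boolP (x \in S)) => // /cd [->].
  by apply/ffunP => x; rewrite !patchE; case: (boolP (x \in S)) => // /cd [_ ->].
move=> i j; rewrite entryE; case: ifP => [cij | /negbT]; last exact: O_off.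
congr (entry O _ _); apply/ffunP => x; rewrite patchE; case: ifP => // /negbT.
by move/eq_offP: cij => /[apply].
Qed.

Lemma supported_onT O : supported_on setT O.
Proof.
apply/supported_onE; split=> [c d /eq_offP [] x | c d c' _]; first by rewrite in_setT.
by congr (entry O _ _); apply/ffunP => x; rewrite patchE in_setT.
Qed.

Lemma supported_onS S T O : S \subset T -> supported_on S O -> supported_on T O.
Proof.
move=> /subsetP ST /supported_onE [O_off O_inv]; apply/supported_onE; split.
  move=> c d ncd; apply: O_off; move: ncd; apply: contra => /eq_offP cd.
  by apply/eq_offP => x /(contra (ST x)) /cd.
move=> c d c' /eq_offP cdT; case: (boolP (eq_off S c d)) => [/eq_offP cdS | ncdS].
  rewrite (O_inv _ _ (patch T c' d)); last exact/eq_offP.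
  congr (entry O _ _); apply/ffunP => x; rewrite !patchE;
    case: (boolP (x \in S)) => [/ST -> // | /cdS cdx]; by case: (x \in T).
rewrite !O_off //; move: ncdS; apply: contra => /eq_offP cd; apply/eq_offP => x xS.
by have := cd x xS; rewrite !patchE; case: (boolP (x \in T)) => // /cdT.
Qed.

Lemma supported_onI S T O :
  supported_on S O -> supported_on T O -> supported_on (S :&: T) O.
Proof.
move=> /supported_onE [S_off S_inv] /supported_onE [T_off T_inv].
apply/supported_onE; split=> [c d | c d c' cd].
  case: (boolP (eq_off S c d)) => [cdS | /S_off //].
  case: (boolP (eq_off T c d)) => [cdT | /T_off //].
  by rewrite eq_offI.
rewrite (T_inv _ _ c' (eq_offS (subsetIr S T) cd)) (S_inv _ _ c') ?patchI //.
apply/eq_offP => x xS; rewrite !patchE; case: ifP => // xT.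
by move/eq_offP: cd; apply; rewrite in_setI xT andbT.
Qed.

Lemma supported_on_compl S O :
  {in S, forall x, ~ in_support O x} -> supported_on (~: S) O.
Proof.
move=> S_out; have -> : ~: S = \bigcap_(x in S) [set~ x].
  apply/setP => y; rewrite in_setC; apply/idP/bigcapP => [yS x xS | yS].
    by rewrite in_setC1; apply: contraNneq yS => ->.
  by apply/negP => /yS; rewrite in_setC1 eqxx.
apply: (big_ind (fun T => supported_on T O)) => [|T1 T2|x xS].
- exact: supported_onT.
- exact: supported_onI.
- have [T /(@imply_to_and (supported_on T O)) [OT xT]] := not_all_ex_not _ _ (S_out x xS).
  apply: supported_onS OT; apply/subsetP => y; rewrite in_setC1.
  by apply: contraTneq => ->; apply/negP.
Qed.

Lemma mxtrace_entries O : \tr O = \sum_c entry O c c.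
Proof. by rewrite /mxtrace (reindex enum_rank) //; exact: onW_bij (enum_rank_bij _). Qed.

Lemma entry_mul X Q c d : entry (X *m Q) c d = \sum_e entry X c e * entry Q e d.
Proof. by rewrite /entry mxE (reindex enum_rank) //; exact: onW_bij (enum_rank_bij _). Qed.

Lemma mxtrace_mul_supported_compl S X Q :
  supported_on S X -> supported_on (~: S) Q ->
  \tr (X *m Q) * \tr (1%:M : op) = \tr X * \tr Q.
Proof.
move=> /supported_onE [X_off X_inv] /supported_onE [Q_off Q_inv].
have trXQ : \tr (X *m Q) = \sum_c entry X c c * entry Q c c.
  rewrite mxtrace_entries; apply: eq_bigr => c _.
  rewrite entry_mul (bigD1 c) //= big1 ?addr0 // => e ne.
  case: (boolP (eq_off S c e)) => [ce | /X_off ->]; last by rewrite mul0r.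
  rewrite Q_off ?mulr0 //; apply: contra ne => ec.
  by rewrite (eq_off_setC ce) // eq_off_sym.
pose swap (p : cf * cf) := (patch S p.2 p.1, patch S p.1 p.2).
have swapK : involutive swap.
  by move=> [c d]; congr pair; apply/ffunP => x; rewrite !patchE; case: (x \in S).
rewrite trXQ mxtrace1 !mxtrace_entries mulr_natr -sumrMnl big_distrlr /=.
transitivity (\sum_c \sum_(d : cf) entry X c c * entry Q c c).
  by apply: eq_bigr => c _; rewrite sumr_const.
rewrite !pair_bigA [RHS](reindex_inj (inv_inj swapK)) /=.
apply: eq_bigr => -[c d] _ /=.
by rewrite -X_inv ?eq_off_refl // -patch_setC -Q_inv ?eq_off_refl.
Qed.
End Support.

Lemma nbhdS (R : realType) (V : finType) (d : V -> V -> R) (l : R) (S T : {set V}) :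
  S \subset T -> nbhd d l S \subset nbhd d l T.
Proof.
move=> /subsetP ST; apply/subsetP => y; rewrite !inE => /existsP [x /andP [xS dxy]].
by apply/existsP; exists x; rewrite ST.
Qed.

Lemma commutant_supported_compl (R : realType) (V : finType) (n : V -> nat)
    (d : V -> V -> R) (l : R) (A : op R n -> Prop) (Q : op R n) (S : {set V}) :
  visibly_simple d l A -> A Q ->
  (forall P, A P -> supported_on (nbhd d l S) P -> commutator Q P = 0) ->
  supported_on (~: S) Q.
Proof.
move=> visA AQ Qcomm; apply: supported_on_compl => x xS Qx.
have [P [AP Px]] := visA Q AQ x Qx; apply/negP; rewrite negbK Qcomm //.
by apply: supported_onS Px; apply: nbhdS; rewrite sub1set.
Qed.

Theorem mainTheorem20 (R : realType) (V : finType) (n : V -> nat)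
    (d : V -> V -> R) (l : R) (A : op R n -> Prop) (O : op R n) :
  is_metric d ->
  star_algebra A ->
  visibly_simple d l A ->
  forall (X : op R n) (S : {set V}),
    A X -> supported_on S X ->
    \tr (X *m O) * \tr (1%:M : op R n) != \tr X * \tr O ->
    exists P : op R n,
      [/\ A P, supported_on (nbhd d l S) P & commutator O P != 0].
Proof.
move=> _ [A1 AD AZ AM Aadj] visA X S AX suppX trXO; apply: NNPP => noP.
have [U AU] : exists U : {vspace op R n}, forall P, A P <-> P \in U.
  by apply: exists_vspace_of_pred => //; rewrite -(scale0r 1%:M); apply: AZ.
have adjU : {in U, forall Z, adjmx Z \in U} by move=> Z /AU /Aadj /AU.
have mulU : {in U &, forall P Q, P *m Q \in U} by move=> P Q /AU AP /AU AQ; apply/AU/AM.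
have [Q [QU QO] ] := trace_proj_exists adjU O.
have suppQ : supported_on (~: S) Q.
  apply: (commutant_supported_compl visA) => [|P AP suppP]; first exact/AU.
  apply/eqP; rewrite subr_eq0; apply/eqP.
  apply: (trace_proj_commute adjU mulU (conj QU QO)); first exact/AU.
  apply/eqP; rewrite -subr_eq0; apply/negPn/negP => OP_neq0; apply: noP.
  by exists P; split.
have trO : \tr O = \tr Q by rewrite -[O]mul1mx -[Q]mul1mx QO //; apply/AU.
move/eqP: trXO; apply.
by rewrite -QO ?trO ?(mxtrace_mul_supported_compl suppX suppQ) //; apply/AU.
Qed.
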